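(* Let $v_1,\dots,v_m$ be nonzero vectors spanning $\mathbb{R}^n$ ($m\ge n$), let $c=(c_i)_{i=1}^m$ with $c_i>0$ and $\sum_i c_i=n$, and let $D_c=\inf\{\det(\sum_i\lambda_iv_i\otimes v_i)/\prod_i\lambda_i^{c_i};\ \lambda_i>0\}$. For $I\subset\{1,\dots,m\}$ with $|I|=n$ let $d_I=\det((v_i)_{i\in I})^2$. Then the infimum $D_c$ is attained at some $m$-tuple of positive numbers if and only if there exist non-negative numbers $(t_I)_{|I|=n}$ and positive numbers $(\lambda_i)_{i=1}^m$ such that $$c=\sum_{|I|=n}t_I1_I\qquad\text{and}\qquad t_I=d_I\prod_{i\in I}\lambda_i\ \text{ for all } I.$$
   Context: $1_I\in\mathbb{R}^m$ is the indicator vector of $I$; $v\otimes v=vv^T$; $\det((v_i)_{i\in I})$ is the determinant of the $n\times n$ matrix with columns $v_i$, $i\in I$ (its square does not depend on the ordering). *)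

From HB Require Import structures.
From mathcomp Require Import all_boot all_order all_algebra.
From mathcomp Require Import all_classical all_reals all_analysis.
Set Implicit Arguments. Unset Strict Implicit. Unset Printing Implicit Defensive.
Import Order.TTheory GRing.Theory Num.Theory.
Local Open Scope ring_scope.
Local Open Scope classical_set_scope.

Definition colmat (R : realType) (n m : nat) (v : 'I_m -> 'cV[R]_n) : 'M[R]_(n, m) :=
  \matrix_(j < n, i < m) v i j 0.

Definition Bfun (R : realType) (n m : nat) (v : 'I_m -> 'cV[R]_n) (c : 'I_m -> R)
  (lam : 'I_m -> R) : R :=
  \det (\sum_(i < m) lam i *: (v i *m (v i)^T)) / \prod_(i < m) (lam i `^ c i).

Definition Dc (R : realType) (n m : nat) (v : 'I_m -> 'cV[R]_n) (c : 'I_m -> R) : R :=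
  inf [set Bfun v c lam | lam in [set lam : 'I_m -> R | forall i, 0 < lam i]].

(* d_I = det((v_i)_{i in I})^2, the columns listed in increasing order of i
   (meaningful when #|I| = n) *)
Definition dI (R : realType) (n m : nat) (v : 'I_m -> 'cV[R]_n) (I : {set 'I_m}) : R :=
  (\det (\matrix_(j < n, k < n) (nth 0 [seq v i | i <- enum I] k) j 0)) ^+ 2.

From HB Require Import structures.
From mathcomp Require Import all_boot all_order all_algebra all_fingroup.
From mathcomp Require Import all_classical all_reals all_analysis.
From mathcomp Require Import lra ring.
Set Implicit Arguments.
Unset Strict Implicit.
Unset Printing Implicit Defensive.

Import Order.TTheory GRing.Theory Num.Theory.
Local Open Scope ring_scope.

(* By Cauchy-Binet, det (sum_i lam_i v_i v_i^T) = sum_(|I| = n) d_I prod_(i in I) lam_i,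
   which is positive when the v_i span.  At a minimiser lam, replacing lam_j by
   s lam_j and comparing c_j ln s with its tangent at s = 1 shows that the part of
   this sum coming from the I containing j is c_j times the whole; rescaling lam to
   make the determinant 1 yields t_I = d_I prod_(i in I) lam_i.  Conversely, since
   sum_i c_i = n such t_I sum to 1, and Jensen's inequality for ln with the weights
   t_I gives ln det (sum_i mu_i v_i v_i^T) >= sum_i c_i ln (mu_i / lam_i), which is
   B(mu) >= B(lam). *)

Section CauchyBinet.
Variables (R : comNzRingType) (n m : nat).

Lemma det_mulmx_ffun (A : 'M[R]_(n, m)) (B : 'M[R]_(m, n)) :
  \det (A *m B) = \sum_(f : {ffun 'I_n -> 'I_m})
     (\prod_i A i (f i)) * \det (\matrix_(i, j) B (f i) j).
Proof.
transitivity (\sum_(s : 'S_n) \sum_(f : {ffun 'I_n -> 'I_m})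
   (-1) ^+ s * \prod_i (A i (f i) * B (f i) (s i))).
  apply: eq_bigr => s _; rewrite -big_distrr /=; congr (_ * _).
  rewrite -(bigA_distr_bigA (fun i k => A i k * B k (s i))) /=.
  by apply: eq_bigr => i _; rewrite mxE.
rewrite exchange_big; apply: eq_bigr => f _; rewrite big_distrr.
apply: eq_bigr => s _ /=; rewrite big_split /= mulrCA; congr (_ * (_ * _)).
by apply: eq_bigr => i _; rewrite mxE.
Qed.

Variables (x0 : 'I_m) (I : {set 'I_m}).
Hypothesis cardI : #|I| = n.

Let enumI (k : 'I_n) : 'I_m := nth x0 (enum I) k.

Let size_enumI : size (enum I) = n. Proof. by rewrite -cardE. Qed.

Let enumI_inj : injective enumI.
Proof.
by move=> k1 k2 /eqP; rewrite nth_uniq ?size_enumI ?enum_uniq // => /eqP/val_inj.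
Qed.

Let enumI_mem k : enumI k \in I.
Proof. by rewrite -mem_enum mem_nth ?size_enumI. Qed.

Lemma big_injffun_onto (F : {ffun 'I_n -> 'I_m} -> R) :
  \sum_(f : {ffun 'I_n -> 'I_m} | injectiveb f && ([set f i | i in 'I_n] == I)) F f =
  \sum_(s : 'S_n) F [ffun i => enumI (s i)].
Proof.
pose idx (f : {ffun 'I_n -> 'I_m}) : {ffun 'I_n -> 'I_n} :=
  [ffun i => insubd i (index (f i) (enum I))].
have idx_enumI (s : 'S_n) : idx [ffun i => enumI (s i)] = pval s.
  apply/ffunP => i; rewrite !ffunE /enumI.
  by rewrite (index_uniq x0) ?size_enumI ?enum_uniq // -pvalE valKd.
rewrite (reindex (fun s : 'S_n => [ffun i => enumI (s i)])) /=; last first.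
  exists (fun f => insubd (1%g : 'S_n) (idx f)).
    by move=> s _; rewrite idx_enumI valKd.
  move=> f /andP [/injectiveP injf /eqP imf].
  have fI i : f i \in enum I by rewrite mem_enum -imf imset_f.
  have idxE i : idx f i = index (f i) (enum I) :> nat.
    rewrite ffunE insubdK // unfold_in /=.
    by rewrite -[X in (_ < X)%N]size_enumI index_mem.
  have idx_inj : injectiveb (idx f).
    apply/injectiveP => i1 i2 /(congr1 val); rewrite /= !idxE.
    by move/(congr1 (nth x0 (enum I))); rewrite !nth_index //; apply: injf.
  apply/ffunP => i; rewrite ffunE -pvalE insubdK // /enumI.
  by rewrite idxE nth_index.
apply: eq_bigl => s; apply/andP; split.
  by apply/injectiveP => i1 i2; rewrite !ffunE => /enumI_inj/perm_inj.
rewrite eqEcard; apply/andP; split.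
  by apply/fintype.subsetP => y /imsetP [i _ ->]; rewrite ffunE.
rewrite cardI card_imset ?card_ord // => i1 i2.
by rewrite !ffunE => /enumI_inj/perm_inj.
Qed.

End CauchyBinet.

Lemma cauchy_binet (R : comNzRingType) n m (x0 : 'I_m)
    (A : 'M[R]_(n, m)) (B : 'M[R]_(m, n)) :
  \det (A *m B) = \sum_(I : {set 'I_m} | #|I| == n)
     \det (\matrix_(j, k) A j (nth x0 (enum I) k)) *
     \det (\matrix_(k, j) B (nth x0 (enum I) k) j).
Proof.
rewrite det_mulmx_ffun (bigID (fun f : {ffun 'I_n -> 'I_m} => injectiveb f)) /=.
rewrite [X in _ + X]big1 ?addr0; last first.
  move=> f /injectivePn [i1 [i2 Di12 Ef12]].
  by rewrite (determinant_alternate Di12) ?mulr0 // => j; rewrite !mxE Ef12.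
rewrite (partition_big (fun f : {ffun 'I_n -> 'I_m} => [set f i | i in 'I_n])
   (fun I : {set 'I_m} => #|I| == n)) /=; last first.
  by move=> f /injectiveP injf; rewrite card_imset // card_ord.
apply: eq_bigr => I /eqP cardI; rewrite (big_injffun_onto x0 cardI).
set enumI := nth x0 (enum I).
transitivity (\sum_(s : 'S_n) (-1) ^+ s * \prod_i A i (enumI (s i)) *
                \det (\matrix_(k, j) B (enumI k) j)).
  apply: eq_bigr => s _.
  have -> : \matrix_(i, j) B ([ffun i => enumI (s i)] i) j =
            row_perm s (\matrix_(k, j) B (enumI k) j).
    by apply/matrixP => i j; rewrite !mxE ffunE.
  rewrite row_permE det_mulmx det_perm mulrCA mulrA; congr (_ * _ * _).
  by apply: eq_bigr => i _; rewrite ffunE.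
rewrite -big_distrl /=; congr (_ * _); apply: eq_bigr => s _.
by congr (_ * _); apply: eq_bigr => i _; rewrite mxE.
Qed.

Section LnInequalities.
Variable R : realType.

Lemma ln_le_subr1 (x : R) : 0 < x -> ln x <= x - 1.
Proof.
by move=> x_gt0; have := @le_ln1Dx R (x - 1); rewrite (addrC 1) subrK; apply; lra.
Qed.

Lemma ln_ge_1Vr (x : R) : 0 < x -> 1 - x^-1 <= ln x.
Proof.
move=> x_gt0; have := @ln_le_subr1 x^-1.
by rewrite invr_gt0 lnV ?posrE // => /(_ x_gt0); lra.
Qed.

Lemma ln_prod (I : finType) (P : pred I) (F : I -> R) :
  (forall i, P i -> 0 < F i) -> ln (\prod_(i | P i) F i) = \sum_(i | P i) ln (F i).
Proof.
move=> F_gt0; rewrite (eq_bigr (fun i => expR (ln (F i)))) => [|i /F_gt0 Fi].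
  by rewrite -expR_sum expRK.
by rewrite lnK ?posrE.
Qed.

(* The only line through (1, 0) lying above [c * ln] is its tangent. *)
Lemma ln_tangent_slope (c q : R) : 0 < c ->
  (forall s, 0 < s -> c * ln s <= (s - 1) * q) -> q = c.
Proof.
move=> c_gt0 tangent.
have secant s : 0 < s -> c * (s - 1) <= s * (s - 1) * q.
  move=> s_gt0; have := tangent s s_gt0; have := ln_ge_1Vr s_gt0.
  have : s * s^-1 = 1 by rewrite mulfV ?gt_eqF.
  have : 0 < c * s by rewrite mulr_gt0.
  nra.
have q_gt0 : 0 < q by have /secant : (0 : R) < 2 by []; nra.
have ratio e : 0 < e -> 0 < e / q /\ e / q * q = e.
  by move=> e_gt0; rewrite divr_gt0 ?divfK ?gt_eqF.
apply/eqP; rewrite eq_le; apply/andP; split; apply/ler_addgt0Pr => e e_gt0.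
- have [|e_lt_q] := lerP q e; first lra.
  have [u_gt0 uq] := ratio e e_gt0.
  have /secant : 0 < 1 - e / q by rewrite subr_gt0 ltr_pdivrMr // mul1r.
  nra.
- have [u_gt0 uq] := ratio e e_gt0.
  have /secant : 0 < 1 + e / q by rewrite addr_gt0.
  nra.
Qed.



Lemma sum_ln_le_ln_sum (I : finType) (P : pred I) (t y : I -> R) :
    (forall i, P i -> 0 <= t i) -> (forall i, P i -> 0 < y i) ->
    \sum_(i | P i) t i = 1 ->
  \sum_(i | P i) t i * ln (y i) <= ln (\sum_(i | P i) t i * y i).
Proof.
move=> t_ge0 y_gt0 sum_t; set S := \sum_(i | P i) t i * y i.
have ty_ge0 i : P i -> 0 <= t i * y i.
  by move=> Pi; rewrite mulr_ge0 ?t_ge0 // ltW ?y_gt0.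
have S_gt0 : 0 < S.
  rewrite lt0r sumr_ge0 // andbT; apply/negP => /eqP /(psumr_eq0P ty_ge0) ty0.
  have := sum_t; rewrite big1 => [|i Pi]; first by move/eqP; rewrite eq_sym oner_eq0.
  by have /eqP := ty0 i Pi; rewrite mulf_eq0 (gt_eqF (y_gt0 i Pi)) orbF => /eqP.
rewrite -subr_le0.
have -> : \sum_(i | P i) t i * ln (y i) - ln S = \sum_(i | P i) t i * ln (y i / S).
  rewrite -[ln S]mul1r -sum_t mulr_suml -sumrB; apply: eq_bigr => i Pi.
  by rewrite -mulrBr ln_div ?posrE ?y_gt0.
apply: le_trans (_ : \sum_(i | P i) t i * (y i / S - 1) <= 0).
  apply: ler_sum => i Pi; rewrite ler_wpM2l ?t_ge0 // ln_le_subr1 //.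
  by rewrite divr_gt0 ?y_gt0.
under eq_bigr do rewrite mulrBr mulr1 mulrA.
by rewrite sumrB -mulr_suml divff ?gt_eqF // sum_t subrr.
Qed.

End LnInequalities.

Section Gram.
Variables (R : realType) (n m : nat) (v : 'I_m -> 'cV[R]_n).

Definition gram (lam : 'I_m -> R) : 'M[R]_n := \sum_(i < m) lam i *: (v i *m (v i)^T).

Lemma dI_ge0 (I : {set 'I_m}) : 0 <= dI v I.
Proof. exact: sqr_ge0. Qed.

Lemma det_gram (x0 : 'I_m) lam :
  \det (gram lam) = \sum_(I : {set 'I_m} | #|I| == n) dI v I * \prod_(i in I) lam i.
Proof.
have -> : gram lam = \matrix_(j, i) (lam i * v i j 0) *m \matrix_(i, j) v i j 0.
  apply/matrixP => j k; rewrite !mxE summxE; apply: eq_bigr => i _.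
  by rewrite !mxE big_ord1 !mxE mulrA.
rewrite (cauchy_binet x0); apply: eq_bigr => I /eqP cardI.
have size_enumI : size (enum I) = n by rewrite -cardE.
pose VI := \matrix_(j < n, k < n) v (nth x0 (enum I) k) j 0.
have -> : \matrix_(j, k) (\matrix_(j, i) (lam i * v i j 0)) j (nth x0 (enum I) k) =
          VI *m diag_mx (\row_k lam (nth x0 (enum I) k)).
  by rewrite mul_mx_diag; apply/matrixP => j k; rewrite !mxE mulrC.
have -> : \matrix_(k, j) (\matrix_(i, j) v i j 0) (nth x0 (enum I) k) j = VI^T.
  by apply/matrixP => j k; rewrite !mxE.
have -> : dI v I = \det VI ^+ 2.
  congr (\det _ ^+ 2); apply/matrixP => j k.
  by rewrite !mxE (nth_map x0) // size_enumI.
have -> : \prod_(i in I) lam i = \prod_(k < n) lam (nth x0 (enum I) k).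
  by rewrite -big_enum /= (big_nth x0) size_enumI big_mkord.
rewrite det_mulmx det_tr det_diag mulrAC expr2; congr (_ * _ * _).
by apply: eq_bigr => k _; rewrite mxE.
Qed.

Lemma gram_quadratic_form lam (x : 'rV[R]_n) :
  (x *m gram lam *m x^T) 0 0 = \sum_(i < m) lam i * ((x *m v i) 0 0) ^+ 2.
Proof.
rewrite mulmx_sumr mulmx_suml summxE; apply: eq_bigr => i _.
rewrite -scalemxAr -scalemxAl mxE; congr (_ * _).
by rewrite !mulmxA -[_ *m _ *m x^T]mulmxA -trmx_mul mxE big_ord1 !mxE expr2.
Qed.

Hypothesis rank_v : \rank (colmat v) = n.

Lemma det_gram_gt0 (x0 : 'I_m) lam : (forall i, 0 < lam i) -> 0 < \det (gram lam).
Proof.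
move=> lam_gt0; rewrite lt0r; apply/andP; split; last first.
  rewrite (det_gram x0) sumr_ge0 // => I _.
  by rewrite mulr_ge0 ?dI_ge0 // prodr_ge0 // => i _; rewrite ltW.
apply/det0P => -[x x_neq0 x_ker].
have vx0 i : (x *m v i) 0 0 = 0.
  have := gram_quadratic_form lam x; rewrite x_ker mul0mx mxE => /esym/eqP.
  rewrite psumr_eq0 => [/allP/(_ i (mem_index_enum _))|j _]; last first.
    by rewrite mulr_ge0 ?sqr_ge0 ?ltW.
  by rewrite mulf_eq0 gt_eqF //= sqrf_eq0 => /eqP.
have : x *m colmat v = 0.
  apply/matrixP => a i; rewrite (ord1 a) !mxE -[RHS](vx0 i) mxE.
  by apply: eq_bigr => j _; rewrite mxE.
have free_v : row_free (colmat v) by rewrite /row_free rank_v.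
by move/eqP; rewrite (mulmx_free_eq0 _ free_v) (negPf x_neq0).
Qed.

End Gram.

Lemma sum_set_weights (R : comPzSemiRingType) (T : finType) (Q : pred {set T})
    (t : {set T} -> R) (f : T -> R) :
  \sum_(I | Q I) t I * \sum_(i in I) f i =
  \sum_i (\sum_(I | Q I) t I * (i \in I)%:R) * f i.
Proof.
under eq_bigr do rewrite big_mkcond big_distrr /=.
rewrite exchange_big /=; apply: eq_bigr => i _; rewrite big_distrl /=.
by apply: eq_bigr => I _; case: (i \in I); rewrite ?mulr1 ?mulr0 ?mul0r.
Qed.

Section Minimizers.
Variables (R : realType) (n m : nat) (x0 : 'I_m) (v : 'I_m -> 'cV[R]_n) (c : 'I_m -> R).
Hypothesis rank_v : \rank (colmat v) = n.

Lemma Bfun_gt0 lam : (forall i, 0 < lam i) -> 0 < Bfun v c lam.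
Proof.
move=> lam_gt0; rewrite divr_gt0 ?(det_gram_gt0 rank_v x0) //.
by rewrite prodr_gt0 // => i _; rewrite powR_gt0.
Qed.

Lemma ler_Bfun lam mu : (forall i, 0 < lam i) -> (forall i, 0 < mu i) ->
  (Bfun v c lam <= Bfun v c mu) =
  (ln (\det (gram v lam)) - \sum_i c i * ln (lam i) <=
   ln (\det (gram v mu)) - \sum_i c i * ln (mu i)).
Proof.
have ln_Bfun nu : (forall i, 0 < nu i) ->
    ln (Bfun v c nu) = ln (\det (gram v nu)) - \sum_i c i * ln (nu i).
  move=> nu_gt0; rewrite ln_div ?posrE ?(det_gram_gt0 rank_v x0) //; last first.
    by rewrite prodr_gt0 // => i _; rewrite powR_gt0.
  rewrite ln_prod => [|i _]; last by rewrite powR_gt0.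
  by congr (_ - _); apply: eq_bigr => i _; rewrite ln_powR.
by move=> lam_gt0 mu_gt0; rewrite -ler_ln ?posrE ?Bfun_gt0 // !ln_Bfun.
Qed.

Lemma Bfun_eq_DcP lam : (forall i, 0 < lam i) ->
  Bfun v c lam = Dc v c <->
  (forall mu, (forall i, 0 < mu i) -> Bfun v c lam <= Bfun v c mu).
Proof.
have lbound0 : has_lbound [set Bfun v c mu | mu in [set mu | forall i, 0 < mu i]].
  by exists 0 => _ [mu mu_gt0 <-]; rewrite ltW ?Bfun_gt0.
move=> lam_gt0; split=> [-> mu mu_gt0 | minimal].
  by apply: ge_inf lbound0 _ _; exists mu.
apply/eqP; rewrite eq_le; apply/andP; split.
  apply: lb_le_inf => [|_ [mu mu_gt0 <-]]; last exact: minimal.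
  by exists (Bfun v c lam), lam.
by apply: ge_inf lbound0 _ _; exists lam.
Qed.

(* [lam_j] times the partial derivative of [\det (gram v lam)] in [lam_j] *)
Definition det_gram_weight (lam : 'I_m -> R) (j : 'I_m) : R :=
  \sum_(I : {set 'I_m} | #|I| == n) dI v I * \prod_(i in I) lam i * (j \in I)%:R.

Lemma det_gram_scale lam j s :
  \det (gram v (fun i => lam i * s ^+ (i == j))) =
  \det (gram v lam) + (s - 1) * det_gram_weight lam j.
Proof.
rewrite !(det_gram _ x0) big_distrr -big_split /=; apply: eq_bigr => I _.
rewrite big_split /=; have -> : \prod_(i in I) s ^+ (i == j) = s ^+ (j \in I).
  case: (boolP (j \in I)) => jI.
    by rewrite (bigD1 j) //= eqxx big1 ?mulr1 // => i /andP [_ /negPf ->].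
  rewrite big1 // => i iI; rewrite (_ : i == j = false) //.
  by apply: contraNF jI => /eqP <-.
by case: (j \in I) => /=; ring.
Qed.

Hypothesis c_gt0 : forall i, 0 < c i.
Hypothesis sum_c : \sum_i c i = n%:R.

Let n_gt0 : 0 < n%:R :> R.
Proof.
rewrite -sum_c (bigD1 x0) //= ltr_wpDr ?c_gt0 // sumr_ge0 // => i _.
by rewrite ltW ?c_gt0.
Qed.

Lemma minimizer_det_gram_weight lam : (forall i, 0 < lam i) ->
    (forall mu, (forall i, 0 < mu i) -> Bfun v c lam <= Bfun v c mu) ->
  forall j, det_gram_weight lam j = c j * \det (gram v lam).
Proof.
move=> lam_gt0 minimal j; set P := \det (gram v lam); set W := det_gram_weight lam j.
have P_gt0 : 0 < P by apply: det_gram_gt0.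
suff <- : W / P = c j by rewrite divfK ?gt_eqF.
apply: (ln_tangent_slope (c_gt0 j)) => s s_gt0.
pose mu i := lam i * s ^+ (i == j).
have mu_gt0 i : 0 < mu i by rewrite mulr_gt0 ?exprn_gt0.
have Q_gt0 : 0 < \det (gram v mu) by apply: det_gram_gt0.
have := minimal mu mu_gt0; rewrite ler_Bfun //.
have -> : \sum_i c i * ln (mu i) = \sum_i c i * ln (lam i) + c j * ln s.
  rewrite (eq_bigr (fun i => c i * ln (lam i) + c i * ln s *+ (i == j))) => [|i _].
    rewrite big_split /=; congr (_ + _).
    by rewrite (bigD1 j) //= eqxx big1 ?addr0 // => i /negPf ->; rewrite mulr0n.
  by rewrite lnM ?posrE ?exprn_gt0 // lnXn // mulrDr mulrnAr.
move=> le_B; have : c j * ln s <= ln (\det (gram v mu) / P).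
  by rewrite ln_div ?posrE //; lra.
move/le_trans; apply; apply: le_trans (ln_le_subr1 _) _; first by rewrite divr_gt0.
by rewrite det_gram_scale mulrDl divff ?gt_eqF // addrAC subrr add0r mulrA.
Qed.

Lemma minimizer_decomposition lam : (forall i, 0 < lam i) ->
    (forall mu, (forall i, 0 < mu i) -> Bfun v c lam <= Bfun v c mu) ->
  exists (t : {set 'I_m} -> R) (lam' : 'I_m -> R),
    [/\ forall i, 0 < lam' i,
        forall I : {set 'I_m}, 0 <= t I,
        forall i, c i = \sum_(I : {set 'I_m} | #|I| == n) t I * (i \in I)%:R &
        forall I : {set 'I_m}, t I = dI v I * \prod_(i in I) lam' i].
Proof.
move=> lam_gt0 minimal; set P := \det (gram v lam).
have P_gt0 : 0 < P by apply: det_gram_gt0.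
pose k := P `^ (- n%:R^-1).
have k_gt0 : 0 < k by rewrite powR_gt0.
have kP : k ^+ n * P = 1.
  rewrite -powR_mulrn ?ltW // -powRrM mulNr mulVf ?gt_eqF //.
  by rewrite powR_inv1 ?ltW // mulVf ?gt_eqF.
exists (fun I => dI v I * \prod_(i in I) (k * lam i)), (fun i => k * lam i).
split=> // [i | I | j]; first by rewrite mulr_gt0.
  by rewrite mulr_ge0 ?dI_ge0 // prodr_ge0 // => i _; rewrite ltW ?mulr_gt0.
have -> : c j = k ^+ n * (c j * P) by rewrite mulrCA kP mulr1.
rewrite -(minimizer_det_gram_weight lam_gt0 minimal) big_distrr /=.
apply: eq_bigr => I /eqP cardI.
by rewrite big_split /= prodr_const cardI; ring.
Qed.

Lemma decomposition_minimizer (t : {set 'I_m} -> R) lam : (forall i, 0 < lam i) ->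
    (forall I : {set 'I_m}, #|I| = n -> 0 <= t I) ->
    (forall i, c i = \sum_(I : {set 'I_m} | #|I| == n) t I * (i \in I)%:R) ->
    (forall I : {set 'I_m}, #|I| = n -> t I = dI v I * \prod_(i in I) lam i) ->
  forall mu, (forall i, 0 < mu i) -> Bfun v c lam <= Bfun v c mu.
Proof.
move=> lam_gt0 t_ge0 c_t t_dI mu mu_gt0.
have sum_t : \sum_(I : {set 'I_m} | #|I| == n) t I = 1.
  apply: (mulfI (lt0r_neq0 n_gt0)); rewrite mulr1 -[in RHS]sum_c.
  under [RHS]eq_bigr => i _ do rewrite -[c i]mulr1 c_t.
  rewrite -sum_set_weights mulr_sumr; apply: eq_bigr => I /eqP cardI.
  by rewrite sumr_const cardI mulrC.
pose r i := mu i / lam i.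
have r_gt0 i : 0 < r i by rewrite divr_gt0.
have prod_r_gt0 (I : {set 'I_m}) : 0 < \prod_(i in I) r i by rewrite prodr_gt0.
have det_lam : \det (gram v lam) = 1.
  by rewrite -sum_t (det_gram _ x0); apply: eq_bigr => I /eqP /t_dI.
have det_mu : \det (gram v mu) =
    \sum_(I : {set 'I_m} | #|I| == n) t I * \prod_(i in I) r i.
  rewrite (det_gram _ x0); apply: eq_bigr => I /eqP cardI.
  rewrite t_dI // -mulrA -big_split /=; congr (_ * _); apply: eq_bigr => i _.
  by rewrite mulrC divfK ?gt_eqF.
have sum_c_ln : \sum_i c i * ln (r i) =
    \sum_(I : {set 'I_m} | #|I| == n) t I * ln (\prod_(i in I) r i).
  under eq_bigr do rewrite c_t; rewrite -sum_set_weights.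
  by apply: eq_bigr => I _; rewrite ln_prod.
have := sum_ln_le_ln_sum (fun I cardI => t_ge0 I (eqP cardI))
  (fun I _ => prod_r_gt0 I) sum_t.
rewrite -sum_c_ln -det_mu; under eq_bigr do rewrite ln_div ?posrE // mulrBr.
by rewrite sumrB ler_Bfun // det_lam ln1; lra.
Qed.

End Minimizers.

Theorem proposition4 (R : realType) (n m : nat) (v : 'I_m -> 'cV[R]_n)
  (c : 'I_m -> R) :
  (n <= m)%N ->
  (forall i, v i != 0) ->
  \rank (colmat v) = n ->
  (forall i, 0 < c i) ->
  \sum_(i < m) c i = n%:R ->
  (exists lam : 'I_m -> R, (forall i, 0 < lam i) /\ Bfun v c lam = Dc v c)
  <->
  (exists (t : {set 'I_m} -> R) (lam : 'I_m -> R),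
      (forall i, 0 < lam i) /\
      (forall I : {set 'I_m}, #|I| = n -> 0 <= t I) /\
      (forall i, c i = \sum_(I : {set 'I_m} | #|I| == n) t I * (i \in I)%:R) /\
      (forall I : {set 'I_m}, #|I| = n -> t I = dI v I * \prod_(i in I) lam i)).
Proof.
move=> + _; case: m v c => [|m] v c le_nm rank_v c_gt0 sum_c.
  move: le_nm; rewrite leqn0 => /eqP n0; subst n.
  have B1 lam : Bfun v c lam = 1 by rewrite /Bfun !big_ord0 det_mx00 divr1.
  split=> _.
    exists (fun I => dI v I * \prod_(i in I) 1), (fun=> 1).
    split=> [[] // | ]; split=> [I _ | ]; last by split=> [[] // | ].
    by rewrite mulr_ge0 ?dI_ge0 ?prodr_ge0.
  exists (fun=> 1); split=> [[] // | ].
  rewrite /Dc B1 (_ : [set _ | _ in _] = [set 1])%classic ?inf1 //.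
  apply/seteqP; split=> [_ [lam _ <-] | _ ->]; first by rewrite B1.
  by exists (fun=> 1) => // -[].
have DcP := Bfun_eq_DcP ord0 c rank_v.
split=> [[lam [lam_gt0 /(DcP _ lam_gt0) minimal]] |
         [t [lam [lam_gt0 [t_ge0 [c_t t_dI]]]]]].
  have [t [lam' [lam'_gt0 t_ge0 c_t t_dI]]] :=
    minimizer_decomposition ord0 rank_v c_gt0 sum_c lam_gt0 minimal.
  by exists t, lam'.
exists lam; split=> //; apply/(DcP _ lam_gt0).
exact: (decomposition_minimizer ord0 rank_v c_gt0 sum_c lam_gt0 t_ge0 c_t t_dI).
Qed.
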